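(* Let $y\in[0,1]$, $z\in(0,1]$, and $U=H^{(z)}_{12}H^{(y)}_{23}$. Then $$\sup_{\sigma}\ \mathrm{Tr}\big[U(\sigma\otimes|0\rangle\langle0|)U^\dagger\,\big((\mathbb 1-|0\rangle\langle0|)\otimes|0\rangle\langle0|\otimes|0\rangle\langle0|\big)\big]=1-(1-y)(1-z),$$ where the supremum is over all density operators $\sigma$ on the two-mode Fock space (modes $1,2$), and it is attained by the state $$|\phi\rangle=\sqrt{\tfrac{z}{1-(1-y)(1-z)}}\,|10\rangle+\sqrt{\tfrac{y(1-z)}{1-(1-y)(1-z)}}\,|01\rangle.$$ In particular, for $y=1-\frac1{2(1-x)}$, $z=2x$ with $x\in(0,\tfrac12]$, the supremum equals $\frac1{2(1-x)}$.
   Context: Bosonic modes $1,2,3$ with creation operators $\hat a_k^\dagger$ and Fock states $|n\rangle$; in tensor products the factors are modes $1,2,3$ in order, and $\sigma\otimes|0\rangle\langle0|$ means mode $3$ is in the vacuum. For $r\in[0,1]$, $H^{(r)}_{kl}$ is the passive linear-optical unitary fixing the vacuum with $\hat a_k^\dagger\mapsto\sqrt r\,\hat a_k^\dagger+\sqrt{1-r}\,\hat a_l^\dagger$, $\hat a_l^\dagger\mapsto\sqrt{1-r}\,\hat a_k^\dagger-\sqrt r\,\hat a_l^\dagger$. $U=H^{(z)}_{12}H^{(y)}_{23}$ means first $H^{(y)}$ on modes $2,3$, then $H^{(z)}$ on modes $1,2$. The projector $(\mathbb 1-|0\rangle\langle0|)\otimes|00\rangle\langle00|$ corresponds to ideal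 threshold (click/no-click) detectors registering a click on mode $1$ and no click on modes $2,3$. *)

From Stdlib Require Import Reals Lra Factorial.
Open Scope R_scope.

Record C := mkC { Re : R; Im : R }.
Definition Cadd (u v : C) : C := mkC (Re u + Re v) (Im u + Im v).
Definition Cmul (u v : C) : C :=
  mkC (Re u * Re v - Im u * Im v) (Re u * Im v + Im u * Re v).
Definition Cconj (u : C) : C := mkC (Re u) (- Im u).
Definition RtoC (r : R) : C := mkC r 0.

Fixpoint Csum (n : nat) (f : nat -> C) : C :=
  match n with
  | O => f O
  | S k => Cadd (Csum k f) (f (S k))
  end.

(** * Passive linear optics on three modes (modes 1,2,3 of the paper are
    indexed 0,1,2 here).
    A mode matrix M describes the unitary U with U|vac> = |vac> and
    U a_k^dag U^dag = sum_l M l k a_l^dag  (column k = image of a_k^dag). *)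
Definition mode_mat := nat -> nat -> R.

Definition id_mode : mode_mat := fun i j => if Nat.eqb i j then 1 else 0.

Definition Hmode (r : R) (k l : nat) : mode_mat := fun i j =>
  if Nat.eqb j k then
    (if Nat.eqb i k then sqrt r else if Nat.eqb i l then sqrt (1 - r) else 0)
  else if Nat.eqb j l then
    (if Nat.eqb i k then sqrt (1 - r) else if Nat.eqb i l then - sqrt r else 0)
  else id_mode i j.

Definition mmul (A B : mode_mat) : mode_mat := fun i j =>
  A i 0%nat * B 0%nat j + A i 1%nat * B 1%nat j + A i 2%nat * B 2%nat j.

Definition Umode (y z : R) : mode_mat := mmul (Hmode z 0 1) (Hmode y 1 2).

(** Three-mode vectors in the Fock basis (real amplitudes suffice here). *)
Definition fock3 := nat -> nat -> nat -> R.

Definition vac3 : fock3 := fun m0 m1 m2 =>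
  match m0, m1, m2 with O, O, O => 1 | _, _, _ => 0 end.

Definition create (l : nat) (f : fock3) : fock3 := fun m0 m1 m2 =>
  match l with
  | O => match m0 with O => 0 | S p => sqrt (INR m0) * f p m1 m2 end
  | 1%nat => match m1 with O => 0 | S p => sqrt (INR m1) * f m0 p m2 end
  | _ => match m2 with O => 0 | S p => sqrt (INR m2) * f m0 m1 p end
  end.

Definition create_img (M : mode_mat) (k : nat) (f : fock3) : fock3 :=
  fun m0 m1 m2 =>
    M 0%nat k * create 0 f m0 m1 m2 + M 1%nat k * create 1 f m0 m1 m2
    + M 2%nat k * create 2 f m0 m1 m2.

Fixpoint iter_create (M : mode_mat) (k j : nat) (f : fock3) : fock3 :=
  match j with
  | O => f
  | S j' => create_img M k (iter_create M k j' f)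
  end.

(** passive_amp M n0 n1 n2 m0 m1 m2 = <m0 m1 m2| U |n0 n1 n2>, computed from
    |n> = prod_k (a_k^dag)^{n_k} / sqrt(n_k!) |vac>, U|vac> = |vac>. *)
Definition passive_amp (M : mode_mat) (n0 n1 n2 : nat) : fock3 :=
  fun m0 m1 m2 =>
    iter_create M 0 n0 (iter_create M 1 n1 (iter_create M 2 n2 vac3)) m0 m1 m2
    / sqrt (INR (fact n0 * fact n1 * fact n2)).

(** * Two-mode density operators, as matrices in the Fock basis:
    s a b a' b' = <a b| sigma |a' b'>. *)
Definition dens2 := nat -> nat -> nat -> nat -> C.

Definition is_density (s : dens2) : Prop :=
  (forall a b a' b', s a b a' b' = Cconj (s a' b' a b)) /\
  (* positive semidefinite (tested on all finitely supported vectors) *)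
  (forall (N : nat) (v : nat -> nat -> C),
     0 <= Re (Csum N (fun a => Csum N (fun b => Csum N (fun a' => Csum N (fun b' =>
              Cmul (Cconj (v a b)) (Cmul (s a b a' b') (v a' b')))))))) /\
  (* unit trace (diagonal summed by total photon number n = a + b) *)
  infinite_sum (fun n => Re (Csum n (fun a => s a (n - a)%nat a (n - a)%nat))) 1.

(** <n,0,0| U (sigma (x) |0><0|) U^dag |n,0,0>; only inputs a,b <= n can
    contribute (U conserves photon number). *)
Definition click_term (y z : R) (s : dens2) (n : nat) : R :=
  Re (Csum n (fun a => Csum n (fun b => Csum n (fun a' => Csum n (fun b' =>
     Cmul (RtoC (passive_amp (Umode y z) a b 0%nat n 0%nat 0%nat))
          (Cmul (s a b a' b')
                (Cconj (RtoC (passive_amp (Umode y z) a' b' 0%nat n 0%nat 0%nat))))))))).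

(** Tr[U(sigma (x) |0><0|)U^dag ((1-|0><0|) (x) |0><0| (x) |0><0|)] = t,
    i.e. sum over the basis states |n,0,0>, n >= 1. *)
Definition click_prob_is (y z : R) (s : dens2) (t : R) : Prop :=
  infinite_sum (fun n => click_term y z s (S n)) t.

Definition achievable (y z : R) : R -> Prop :=
  fun t => exists s : dens2, is_density s /\ click_prob_is y z s t.

Definition phi_vec (y z : R) : nat -> nat -> C := fun a b =>
  match a, b with
  | 1%nat, O => RtoC (sqrt (z / (1 - (1 - y) * (1 - z))))
  | O, 1%nat => RtoC (sqrt (y * (1 - z) / (1 - (1 - y) * (1 - z))))
  | _, _ => RtoC 0
  end.

Definition pure_dens (v : nat -> nat -> C) : dens2 :=
  fun a b a' b' => Cmul (v a b) (Cconj (v a' b')).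

From Pilot Require Import Defs.
From Stdlib Require Import Reals Lra Lia Factorial.
Open Scope R_scope.

(* A passive interferometer conserves photon number, so in the n-photon sector
   the only inputs reaching |n,0,0> are the states |a, n-a>, with real
   amplitudes w_a whose squares are the binomial terms C(n,a) (U00^2)^a
   (U01^2)^(n-a).  The click probability of sigma in that sector is the
   quadratic form w^T sigma_n w, which positivity of sigma bounds by
   |w|^2 Tr sigma_n = p^n Tr sigma_n, where p = U00^2 + U01^2 = 1-(1-y)(1-z).
   Summing over n >= 1 gives at most p, and the one-photon state proportional
   to (U00, U01) saturates the bound. *)

Lemma sum_f_R0_nonneg (u : nat -> R) N :
  (forall i, (i <= N)%nat -> 0 <= u i) -> 0 <= sum_f_R0 u N.
Proof.
  intros Hu. rewrite <- (sum_eq_R0 (fun _ => 0) N) by auto.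
  apply sum_Rle. exact Hu.
Qed.

Lemma sum_f_R0_single (u : nat -> R) N k : (k <= N)%nat ->
  (forall i, (i <= N)%nat -> i <> k -> u i = 0) -> sum_f_R0 u N = u k.
Proof.
  induction N as [|N IH]; intros Hk Hu; simpl.
  - replace k with 0%nat by lia. reflexivity.
  - destruct (Nat.eq_dec k (S N)) as [->|Hne].
    + rewrite sum_eq_R0 by (intros; apply Hu; lia). ring.
    + rewrite IH, (Hu (S N)) by (lia || (intros; apply Hu; lia)). ring.
Qed.

Lemma sum_f_R0_swap (f : nat -> nat -> R) N M :
  sum_f_R0 (fun i => sum_f_R0 (fun j => f i j) N) M =
  sum_f_R0 (fun j => sum_f_R0 (fun i => f i j) M) N.
Proof.
  induction M as [|M IH]; simpl; [reflexivity|].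
  rewrite IH, <- plus_sum. reflexivity.
Qed.

Lemma cv_const (b : R) : Un_cv (fun _ => b) b.
Proof. intros eps Heps. exists 0%nat. intros n _. rewrite Rdist_eq. lra. Qed.

Lemma infinite_sum_finite_support (u : nat -> R) K :
  (forall n, (K < n)%nat -> u n = 0) -> infinite_sum u (sum_f_R0 u K).
Proof.
  intros Hu eps Heps. exists K. intros n Hn.
  assert (E : sum_f_R0 u n = sum_f_R0 u K).
  { induction Hn as [|m Hm IH]; [reflexivity|].
    rewrite tech5, IH, (Hu (S m)) by lia. ring. }
  rewrite E, Rdist_eq. lra.
Qed.

(** * Positive semidefinite quadratic forms *)

Definition quad_form (n : nat) (B : nat -> nat -> R) (u : nat -> R) : R :=
  sum_f_R0 (fun a => sum_f_R0 (fun a' => u a * u a' * B a a') n) n.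

Definition spike (i : nat) (c : R) (a : nat) : R := if (a =? i)%nat then c else 0.

Lemma sum_two_spikes_mul N i j c d (F : nat -> R) : (i <= N)%nat -> (j <= N)%nat ->
  sum_f_R0 (fun a => (spike i c a + spike j d a) * F a) N = c * F i + d * F j.
Proof.
  intros Hi Hj.
  rewrite (sum_eq _ (fun a => spike i c a * F a + spike j d a * F a)) by (intros; ring).
  rewrite plus_sum, (sum_f_R0_single _ N i), (sum_f_R0_single _ N j); auto;
    try (intros k _ Hk; unfold spike; apply Nat.eqb_neq in Hk; rewrite Hk; ring).
  unfold spike. rewrite !Nat.eqb_refl. reflexivity.
Qed.

Lemma quad_form_two_spikes N B i j c d : (i <= N)%nat -> (j <= N)%nat ->
  quad_form N B (fun a => spike i c a + spike j d a)
  = c * c * B i i + c * d * B i j + d * c * B j i + d * d * B j j.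
Proof.
  intros Hi Hj. unfold quad_form.
  rewrite (sum_eq _ (fun a => (spike i c a + spike j d a) * (c * B a i + d * B a j))).
  - rewrite sum_two_spikes_mul by auto. ring.
  - intros a _.
    rewrite (sum_eq _ (fun a' => (spike i c a' + spike j d a')
                                 * ((spike i c a + spike j d a) * B a a'))) by (intros; ring).
    rewrite sum_two_spikes_mul by auto. ring.
Qed.

Section PsdForm.
Variables (n : nat) (B : nat -> nat -> R).
Hypothesis B_psd : forall u, 0 <= quad_form n B u.

Lemma psd_diag_nonneg i : (i <= n)%nat -> 0 <= B i i.
Proof.
  intros Hi. pose proof (B_psd (fun a => spike i 1 a + spike i 0 a)) as H.
  rewrite quad_form_two_spikes in H by auto. lra.
Qed.

(* Summing the nonnegative 2x2 minors w_j^2 B_ii + w_i^2 B_jj - w_i w_j (B_ij + B_ji)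
   over all (i, j) gives 2 (|w|^2 Tr B - w^T B w). *)
Lemma psd_quad_form_le w :
  quad_form n B w <= sum_f_R0 (fun a => w a * w a) n * sum_f_R0 (fun a => B a a) n.
Proof.
  set (P := fun i j => w j * w j * B i i + w i * w i * B j j
                       - w i * w j * B i j - w i * w j * B j i).
  assert (HP : 0 <= sum_f_R0 (fun i => sum_f_R0 (fun j => P i j) n) n).
  { apply sum_f_R0_nonneg; intros i Hi; apply sum_f_R0_nonneg; intros j Hj.
    pose proof (B_psd (fun a => spike i (w j) a + spike j (- w i) a)) as H.
    rewrite quad_form_two_spikes in H by auto. unfold P. lra. }
  set (W := sum_f_R0 (fun a => w a * w a) n). set (T := sum_f_R0 (fun a => B a a) n).
  assert (E : sum_f_R0 (fun i => sum_f_R0 (fun j => P i j) n) n =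
              sum_f_R0 (fun i => B i i * W + w i * w i * T
                                 - sum_f_R0 (fun j => w i * w j * B i j) n
                                 - sum_f_R0 (fun j => w i * w j * B j i) n) n).
  { apply sum_eq; intros i _. unfold P, W, T. rewrite !minus_sum, !plus_sum, !scal_sum.
    f_equal; f_equal; f_equal; apply sum_eq; intros; ring. }
  assert (Eswap : sum_f_R0 (fun i => sum_f_R0 (fun j => w i * w j * B j i) n) n
                  = quad_form n B w).
  { unfold quad_form. rewrite (sum_f_R0_swap (fun i j => w i * w j * B j i)).
    apply sum_eq; intros; apply sum_eq; intros; ring. }
  rewrite E, !minus_sum, !plus_sum, <- !scal_sum, Eswap in HP.
  fold (quad_form n B w) in HP. fold W T in HP. lra.
Qed.

End PsdForm.

Lemma C_ext (u v : Defs.C) : Re u = Re v -> Im u = Im v -> u = v.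
Proof. destruct u, v; simpl; intros; subst; reflexivity. Qed.

Lemma Re_Csum n f : Re (Csum n f) = sum_f_R0 (fun i => Re (f i)) n.
Proof. induction n as [|n IH]; simpl; [reflexivity|]. rewrite IH. reflexivity. Qed.

Lemma Re_Csum4 n (F : nat -> nat -> nat -> nat -> Defs.C) :
  Re (Csum n (fun a => Csum n (fun b => Csum n (fun a' => Csum n (fun b' => F a b a' b'))))) =
  sum_f_R0 (fun a => sum_f_R0 (fun b => sum_f_R0 (fun a' =>
    sum_f_R0 (fun b' => Re (F a b a' b')) n) n) n) n.
Proof.
  rewrite Re_Csum. apply sum_eq; intros. rewrite Re_Csum. apply sum_eq; intros.
  rewrite Re_Csum. apply sum_eq; intros. apply Re_Csum.
Qed.

Lemma sum4_sector n (X : nat -> nat -> R) (G : nat -> nat -> nat -> nat -> R) :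
  (forall a b, (a <= n)%nat -> b <> (n - a)%nat -> X a b = 0) ->
  sum_f_R0 (fun a => sum_f_R0 (fun b => sum_f_R0 (fun a' => sum_f_R0 (fun b' =>
    X a b * X a' b' * G a b a' b') n) n) n) n
  = quad_form n (fun a a' => G a (n - a)%nat a' (n - a')%nat) (fun a => X a (n - a)%nat).
Proof.
  intros HX. apply sum_eq; intros a Ha.
  transitivity (sum_f_R0 (fun b => sum_f_R0 (fun a' =>
                  X a b * X a' (n - a')%nat * G a b a' (n - a')%nat) n) n).
  { apply sum_eq; intros b _. apply sum_eq; intros a' Ha'.
    apply (sum_f_R0_single (fun b' => X a b * X a' b' * G a b a' b')); [lia|].
    intros i _ Hne. rewrite (HX a' i) by lia. ring. }
  apply (sum_f_R0_single (fun b => sum_f_R0 (fun a' =>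
           X a b * X a' (n - a')%nat * G a b a' (n - a')%nat) n)); [lia|].
  intros i _ Hne. apply sum_eq_R0. intros. rewrite (HX a i) by lia. ring.
Qed.

Definition sector (s : dens2) (n : nat) (a a' : nat) : R :=
  Re (s a (n - a)%nat a' (n - a')%nat).

Definition sector_trace (s : dens2) (n : nat) : R :=
  Re (Csum n (fun a => s a (n - a)%nat a (n - a)%nat)).

Lemma sector_trace_sum s n : sector_trace s n = sum_f_R0 (fun a => sector s n a a) n.
Proof. apply Re_Csum. Qed.

Lemma density_sector_psd s n u : is_density s -> 0 <= quad_form n (sector s n) u.
Proof.
  intros [_ [Hpsd _]].
  set (X := fun a b => if (b =? n - a)%nat then u a else 0).
  specialize (Hpsd n (fun a b => RtoC (X a b))). rewrite Re_Csum4 in Hpsd.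
  replace (quad_form n (sector s n) u)
    with (quad_form n (fun a a' => Re (s a (n - a)%nat a' (n - a')%nat))
                      (fun a => X a (n - a)%nat)).
  - rewrite <- (sum4_sector n X (fun a b a' b' => Re (s a b a' b'))).
    + erewrite sum_eq; [exact Hpsd|]. intros; apply sum_eq; intros; apply sum_eq; intros;
        apply sum_eq; intros. simpl. ring.
    + intros a b _ Hb. unfold X. apply Nat.eqb_neq in Hb. rewrite Hb. reflexivity.
  - unfold quad_form. apply sum_eq; intros; apply sum_eq; intros.
    unfold X, sector. rewrite !Nat.eqb_refl. reflexivity.
Qed.

Lemma sector_trace_nonneg s n : is_density s -> 0 <= sector_trace s n.
Proof.
  intros Hs. rewrite sector_trace_sum. apply sum_f_R0_nonneg. intros i Hi.
  exact (psd_diag_nonneg n (sector s n) (fun u => density_sector_psd s n u Hs) i Hi).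
Qed.

(** * Amplitudes of a passive interferometer into |n,0,0> *)

Lemma iter_create_slice M k j f m :
  iter_create M k j f m 0%nat 0%nat =
  if (j <=? m)%nat
  then M 0%nat k ^ j * sqrt (INR (fact m) / INR (fact (m - j))) * f (m - j)%nat 0%nat 0%nat
  else 0.
Proof.
  revert m; induction j as [|j IH]; intros m; cbn [iter_create].
  - rewrite Nat.sub_0_r. unfold Rdiv. rewrite Rinv_r by apply INR_fact_neq_0.
    rewrite sqrt_1. simpl. ring.
  - unfold create_img.
    replace (create 1 (iter_create M k j f) m 0%nat 0%nat) with 0 by reflexivity.
    replace (create 2 (iter_create M k j f) m 0%nat 0%nat) with 0 by reflexivity.
    destruct m as [|m]; [simpl; ring|].
    change (create 0 (iter_create M k j f) (S m) 0%nat 0%nat)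
      with (sqrt (INR (S m)) * iter_create M k j f m 0%nat 0%nat).
    rewrite IH. change (S j <=? S m)%nat with (j <=? m)%nat.
    change (S m - S j)%nat with (m - j)%nat.
    destruct (j <=? m)%nat; [|ring].
    change (fact (S m)) with (S m * fact m)%nat.
    rewrite mult_INR. unfold Rdiv. rewrite (Rmult_assoc (INR (S m))).
    rewrite (sqrt_mult_alt (INR (S m))) by apply pos_INR.
    simpl pow. ring.
Qed.

Definition sector_amp (M : mode_mat) (n a : nat) : R :=
  passive_amp M a (n - a) 0%nat n 0%nat 0%nat.

Lemma passive_amp_off_sector M n a b : (a <= n)%nat -> b <> (n - a)%nat ->
  passive_amp M a b 0%nat n 0%nat 0%nat = 0.
Proof.
  intros Ha Hb. unfold passive_amp. cbn [iter_create].
  rewrite !iter_create_slice.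
  replace (a <=? n)%nat with true by (symmetry; apply Nat.leb_le; lia).
  destruct (b <=? n - a)%nat eqn:E; [|unfold Rdiv; ring].
  apply Nat.leb_le in E. destruct (n - a - b)%nat eqn:E2; [lia|].
  change (vac3 (S n0) 0%nat 0%nat) with 0. unfold Rdiv. ring.
Qed.

Lemma sector_amp_sq M n a : (a <= n)%nat ->
  sector_amp M n a * sector_amp M n a =
  Binomial.C n a * (M 0%nat 0%nat * M 0%nat 0%nat) ^ a
  * (M 0%nat 1%nat * M 0%nat 1%nat) ^ (n - a).
Proof.
  intros Ha. unfold sector_amp, passive_amp. cbn [iter_create].
  rewrite !iter_create_slice.
  replace (a <=? n)%nat with true by (symmetry; apply Nat.leb_le; lia).
  rewrite Nat.leb_refl, Nat.sub_diag. change (vac3 0%nat 0%nat 0%nat) with 1.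
  assert (F : forall k, 0 < INR (fact k)) by (intros; apply lt_0_INR, lt_O_fact).
  assert (Hsq : forall x, 0 <= x -> sqrt x * sqrt x = x) by (intros; apply sqrt_sqrt; auto).
  set (A := INR (fact n) / INR (fact (n - a))).
  set (B := INR (fact (n - a)) / INR (fact 0)).
  set (D := INR (fact a * fact (n - a) * fact 0)).
  assert (HD : 0 < D) by (unfold D; rewrite !mult_INR; pose proof (F a);
                          pose proof (F (n - a)%nat); pose proof (F 0%nat);
                          apply Rmult_lt_0_compat; [apply Rmult_lt_0_compat|]; lra).
  assert (HsD : 0 < sqrt D) by (apply sqrt_lt_R0; lra).
  rewrite !Rpow_mult_distr.
  transitivity (M 0%nat 0%nat ^ a * M 0%nat 0%nat ^ a
                * (M 0%nat 1%nat ^ (n - a) * M 0%nat 1%nat ^ (n - a))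
                * (sqrt A * sqrt A) * (sqrt B * sqrt B) / (sqrt D * sqrt D)).
  { field. lra. }
  rewrite (Hsq D), (Hsq A), (Hsq B) by
    (lra || (apply Rle_mult_inv_pos; [apply pos_INR | apply F])).
  unfold A, B, D, Binomial.C. rewrite !mult_INR. change (INR (fact 0)) with 1.
  pose proof (F a). pose proof (F (n - a)%nat). field. lra.
Qed.

Lemma sum_sector_amp_sq M n :
  sum_f_R0 (fun a => sector_amp M n a * sector_amp M n a) n
  = (M 0%nat 0%nat * M 0%nat 0%nat + M 0%nat 1%nat * M 0%nat 1%nat) ^ n.
Proof. rewrite binomial. apply sum_eq. intros a Ha. apply sector_amp_sq. exact Ha. Qed.

Lemma sector_amp_one M : sector_amp M 1 1 = M 0%nat 0%nat /\ sector_amp M 1 0 = M 0%nat 1%nat.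
Proof.
  unfold sector_amp, passive_amp. rewrite !iter_create_slice. simpl.
  rewrite Rdiv_1_r, !sqrt_1. split; field.
Qed.

Lemma Umode_00 y z : Umode y z 0%nat 0%nat = sqrt z.
Proof. unfold Umode, mmul, Hmode, id_mode. simpl. ring. Qed.

Lemma Umode_01 y z : Umode y z 0%nat 1%nat = sqrt (1 - z) * sqrt y.
Proof. unfold Umode, mmul, Hmode, id_mode. simpl. ring. Qed.

Lemma Umode_row0_norm y z : 0 <= y <= 1 -> 0 <= z <= 1 ->
  Umode y z 0%nat 0%nat * Umode y z 0%nat 0%nat + Umode y z 0%nat 1%nat * Umode y z 0%nat 1%nat
  = 1 - (1 - y) * (1 - z).
Proof.
  intros Hy Hz. rewrite Umode_00, Umode_01.
  replace (sqrt (1 - z) * sqrt y * (sqrt (1 - z) * sqrt y))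
    with (sqrt (1 - z) * sqrt (1 - z) * (sqrt y * sqrt y)) by ring.
  rewrite !sqrt_sqrt by lra. ring.
Qed.

Lemma click_term_quad_form y z s n :
  click_term y z s n = quad_form n (sector s n) (sector_amp (Umode y z) n).
Proof.
  unfold click_term. rewrite Re_Csum4.
  rewrite (sum_eq _ (fun a => sum_f_R0 (fun b => sum_f_R0 (fun a' => sum_f_R0 (fun b' =>
             passive_amp (Umode y z) a b 0%nat n 0%nat 0%nat * passive_amp (Umode y z) a' b' 0%nat n 0%nat 0%nat
             * Re (s a b a' b')) n) n) n)).
  - apply sum4_sector. intros. apply passive_amp_off_sector; auto.
  - intros; apply sum_eq; intros; apply sum_eq; intros; apply sum_eq; intros.
    simpl. ring.
Qed.

Lemma click_term_le y z s n : 0 <= y <= 1 -> 0 <= z <= 1 -> is_density s ->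
  click_term y z s n <= (1 - (1 - y) * (1 - z)) ^ n * sector_trace s n.
Proof.
  intros Hy Hz Hs.
  rewrite click_term_quad_form, sector_trace_sum, <- Umode_row0_norm, <- sum_sector_amp_sq
    by auto.
  apply psd_quad_form_le. intros u. apply density_sector_psd. exact Hs.
Qed.

Lemma achievable_le y z t : 0 <= y <= 1 -> 0 <= z <= 1 ->
  achievable y z t -> t <= 1 - (1 - y) * (1 - z).
Proof.
  intros Hy Hz [s [Hs Hclick]]. set (p := 1 - (1 - y) * (1 - z)).
  assert (Hp : 0 <= p <= 1) by (unfold p; split; nra).
  pose proof Hs as [_ [_ Htrace]].
  assert (Htail : forall N, sum_f_R0 (fun k => sector_trace s (S k)) N <= 1).
  { intros N. pose proof (sector_trace_nonneg s 0 Hs) as H0.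
    pose proof (sum_incr (sector_trace s) (S N) 1 Htrace (fun n => sector_trace_nonneg s n Hs))
      as HN.
    rewrite decomp_sum in HN by lia. change (Init.Nat.pred (S N)) with N in HN. lra. }
  refine (Rle_cv_lim _ Hclick (cv_const p)). intros N.
  apply Rle_trans with (sum_f_R0 (fun k => p * sector_trace s (S k)) N).
  - apply sum_Rle. intros k _. eapply Rle_trans; [apply click_term_le; auto|].
    apply Rmult_le_compat_r; [apply sector_trace_nonneg; exact Hs|].
    change ((1 - (1 - y) * (1 - z)) ^ S k) with (p * p ^ k).
    pose proof (pow_incr p 1 k ltac:(lra)) as Hpk. rewrite pow1 in Hpk. nra.
  - rewrite (sum_eq _ (fun k => sector_trace s (S k) * p)), <- scal_sum by (intros; ring).
    pose proof (Htail N). nra.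
Qed.

Lemma achievable_is_lub y z : 0 <= y <= 1 -> 0 <= z <= 1 ->
  forall s, is_density s -> click_prob_is y z s (1 - (1 - y) * (1 - z)) ->
  is_lub (achievable y z) (1 - (1 - y) * (1 - z)).
Proof.
  intros Hy Hz s Hs Hclick. split.
  - intros t Ht. exact (achievable_le y z t Hy Hz Ht).
  - intros b Hb. apply Hb. exists s. split; assumption.
Qed.

Lemma Csum_ext n f g : (forall i, (i <= n)%nat -> f i = g i) -> Csum n f = Csum n g.
Proof.
  induction n as [|n IH]; intros H; simpl; [apply H; lia|].
  rewrite IH, H by (lia || (intros; apply H; lia)). reflexivity.
Qed.

Lemma Csum_mul_l n c f : Csum n (fun i => Cmul c (f i)) = Cmul c (Csum n f).
Proof.
  induction n as [|n IH]; simpl; [reflexivity|].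
  rewrite IH. apply C_ext; unfold Cmul, Cadd; simpl; ring.
Qed.

Lemma Csum_mul_r n c f : Csum n (fun i => Cmul (f i) c) = Cmul (Csum n f) c.
Proof.
  induction n as [|n IH]; simpl; [reflexivity|].
  rewrite IH. apply C_ext; unfold Cmul, Cadd; simpl; ring.
Qed.

Lemma Csum_conj n f : Cconj (Csum n f) = Csum n (fun i => Cconj (f i)).
Proof.
  induction n as [|n IH]; simpl; [reflexivity|].
  rewrite <- IH. apply C_ext; unfold Cconj, Cadd; simpl; ring.
Qed.

Lemma pure_dens_hermitian v a b a' b' :
  pure_dens v a b a' b' = Cconj (pure_dens v a' b' a b).
Proof. unfold pure_dens. apply C_ext; unfold Cmul, Cconj; simpl; ring. Qed.

(* The form of |v><v| at a vector u is |<v|u>|^2. *)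
Lemma pure_dens_psd (v : nat -> nat -> Defs.C) N (u : nat -> nat -> Defs.C) :
  0 <= Re (Csum N (fun a => Csum N (fun b => Csum N (fun a' => Csum N (fun b' =>
              Cmul (Cconj (u a b)) (Cmul (pure_dens v a b a' b') (u a' b'))))))).
Proof.
  set (S := Csum N (fun a' => Csum N (fun b' => Cmul (Cconj (v a' b')) (u a' b')))).
  replace (Csum N _) with (Cmul (Cconj S) S); [unfold Cmul, Cconj; simpl; nra|].
  transitivity (Csum N (fun a => Csum N (fun b => Cmul (Cmul (Cconj (u a b)) (v a b)) S))).
  - rewrite (Csum_ext N _ (fun a => Cmul (Csum N (fun b => Cmul (Cconj (u a b)) (v a b))) S))
      by (intros; apply Csum_mul_r).
    rewrite Csum_mul_r. f_equal. unfold S. rewrite Csum_conj. apply Csum_ext; intros.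
    rewrite Csum_conj. apply Csum_ext; intros.
    apply C_ext; unfold Cmul, Cconj; simpl; ring.
  - apply Csum_ext; intros; apply Csum_ext; intros. unfold S.
    rewrite <- Csum_mul_l. apply Csum_ext; intros.
    rewrite <- Csum_mul_l. apply Csum_ext; intros.
    unfold pure_dens. apply C_ext; unfold Cmul, Cconj; simpl; ring.
Qed.

Lemma phi_vec_off_one y z a b : (a + b <> 1)%nat -> phi_vec y z a b = RtoC 0.
Proof. intros H. destruct a as [|[|a]], b as [|[|b]]; simpl in H; try lia; reflexivity. Qed.

Section OptimalState.
Variables y z : R.
Hypothesis Hy : 0 <= y <= 1.
Hypothesis Hz : 0 < z <= 1.

Let p := 1 - (1 - y) * (1 - z).
Let rho := pure_dens (phi_vec y z).

Lemma p_pos : 0 < p.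
Proof. unfold p. nra. Qed.

Lemma rho_off_sector n a a' : n <> 1%nat -> (a <= n)%nat -> sector rho n a a' = 0.
Proof.
  intros Hn Ha. unfold sector, rho, pure_dens. rewrite (phi_vec_off_one y z a) by lia.
  simpl. ring.
Qed.

Lemma sector_trace_rho_one : sector_trace rho 1 = 1.
Proof.
  unfold sector_trace, rho, pure_dens, phi_vec. simpl. fold p. pose proof p_pos.
  rewrite !sqrt_sqrt by (apply Rle_mult_inv_pos; nra).
  transitivity ((y * (1 - z) + z) / p); [field; lra|].
  unfold p. field. fold p. lra.
Qed.

Lemma phi_density : is_density rho.
Proof.
  split; [|split].
  - apply pure_dens_hermitian.
  - apply pure_dens_psd.
  - change (infinite_sum (sector_trace rho) 1).
    assert (Hoff : forall n, n <> 1%nat -> sector_trace rho n = 0).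
    { intros n Hn. rewrite sector_trace_sum. apply sum_eq_R0.
      intros; apply rho_off_sector; lia. }
    assert (Hsum : sum_f_R0 (sector_trace rho) 1 = 1).
    { simpl. rewrite Hoff, sector_trace_rho_one by lia. ring. }
    rewrite <- Hsum. apply infinite_sum_finite_support. intros n Hn. apply Hoff. lia.
Qed.

Lemma phi_click : click_prob_is y z rho p.
Proof.
  replace p with (sum_f_R0 (fun n => click_term y z rho (S n)) 0).
  - apply infinite_sum_finite_support. intros n Hn.
    rewrite click_term_quad_form. unfold quad_form.
    apply sum_eq_R0; intros; apply sum_eq_R0; intros.
    rewrite rho_off_sector by lia. ring.
  - simpl. rewrite click_term_quad_form. unfold quad_form. simpl.
    destruct (sector_amp_one (Umode y z)) as [-> ->]. rewrite Umode_00, Umode_01.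
    unfold sector, rho, pure_dens, phi_vec. simpl. fold p. pose proof p_pos.
    rewrite !sqrt_div_alt, sqrt_mult_alt by lra.
    set (sz := sqrt z). set (sy := sqrt y). set (s1 := sqrt (1 - z)). set (sp := sqrt p).
    assert (Ez : sz * sz = z) by (apply sqrt_sqrt; lra).
    assert (Ey : sy * sy = y) by (apply sqrt_sqrt; lra).
    assert (E1 : s1 * s1 = 1 - z) by (apply sqrt_sqrt; lra).
    assert (Ep : sp * sp = p) by (apply sqrt_sqrt; lra).
    assert (Hsp : 0 < sp) by (apply sqrt_lt_R0; lra).
    transitivity ((sz * sz + sy * sy * (s1 * s1)) ^ 2 / (sp * sp)); [field; lra|].
    rewrite Ez, Ey, E1, Ep. unfold p. field. fold p. lra.
Qed.

End OptimalState.

Lemma click_sup_attained y z : 0 <= y <= 1 -> 0 < z <= 1 ->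
  is_lub (achievable y z) (1 - (1 - y) * (1 - z)) /\
  is_density (pure_dens (phi_vec y z)) /\
  click_prob_is y z (pure_dens (phi_vec y z)) (1 - (1 - y) * (1 - z)).
Proof.
  intros Hy Hz. pose proof (phi_density y z Hy Hz) as Hdens.
  pose proof (phi_click y z Hy Hz) as Hclick.
  split; [|split; assumption].
  exact (achievable_is_lub y z Hy ltac:(lra) _ Hdens Hclick).
Qed.

Theorem mainTheorem3 :
  (forall y z : R, 0 <= y <= 1 -> 0 < z <= 1 ->
     is_lub (achievable y z) (1 - (1 - y) * (1 - z)) /\
     is_density (pure_dens (phi_vec y z)) /\
     click_prob_is y z (pure_dens (phi_vec y z)) (1 - (1 - y) * (1 - z))) /\
  (forall x : R, 0 < x <= 1 / 2 ->
     is_lub (achievable (1 - 1 / (2 * (1 - x))) (2 * x)) (1 / (2 * (1 - x)))).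
Proof.
  split; [exact click_sup_attained|]. intros x Hx.
  assert (Hy : 0 <= 1 - 1 / (2 * (1 - x)) <= 1).
  { assert (Hinv : 0 < 1 / (2 * (1 - x)) <= 1).
    { split; [apply Rdiv_lt_0_compat; lra|].
      unfold Rdiv. rewrite Rmult_1_l, <- Rinv_1. apply Rinv_le_contravar; lra. }
    lra. }
  replace (1 / (2 * (1 - x))) with (1 - (1 - (1 - 1 / (2 * (1 - x)))) * (1 - 2 * x)) at 2
    by (field; lra).
  apply (click_sup_attained _ (2 * x) Hy). lra.
Qed.
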